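(* Let $\Omega\subset\mathbb{C}$ be a simply connected open set with conformal coordinate $z=x+iy$, let $N:\Omega\to\mathbb{S}^2$ be a smooth harmonic map and let $f:\Omega\to\mathbb{R}^3$ satisfy $f_x=N\times N_y$, $f_y=-N\times N_x$. Let $p\in\Omega$ with $\operatorname{rank}(dN)_p\neq0$. Then, on a neighbourhood of $p$, $f$ is a parallel surface of a regular surface of constant mean curvature, i.e. there are a neighbourhood $U$ of $p$, a regular (immersed) surface $g:U\to\mathbb{R}^3$ with unit normal $N$ and constant mean curvature, and a constant $t$ such that $f=g+tN$ on $U$.
   Context: A smooth map $N:\Omega\to\mathbb{S}^2$ is harmonic iff $N\times(N_{xx}+N_{yy})=0$; the map $f$ (unique up to translation) is called the spherical frontal associated to $N$. A parallel of a surface $g$ with unit normal $N$ is a map of the form $g+tN$, $t\in\mathbb{R}$ constant. *)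

From Stdlib Require Import Reals List.
From Coquelicot Require Import Coquelicot.
Open Scope R_scope.

Definition vec := (R * R * R)%type.
Definition vx (v : vec) : R := fst (fst v).
Definition vy (v : vec) : R := snd (fst v).
Definition vz (v : vec) : R := snd v.
Definition mkv (a b c : R) : vec := (a, b, c).
Definition vzero : vec := mkv 0 0 0.
Definition vadd (u v : vec) : vec := mkv (vx u + vx v) (vy u + vy v) (vz u + vz v).
Definition vscal (t : R) (v : vec) : vec := mkv (t * vx v) (t * vy v) (t * vz v).
Definition vopp (v : vec) : vec := vscal (-1) v.
Definition dot (u v : vec) : R := vx u * vx v + vy u * vy v + vz u * vz v.
Definition cross (u v : vec) : vec :=
  mkv (vy u * vz v - vz u * vy v) (vz u * vx v - vx u * vz v) (vx u * vy v - vy u * vx v).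

(** Maps on the plane (coordinates z = x + i y identified with (x,y)). *)
Definition c1 (F : R -> R -> vec) : R -> R -> R := fun x y => vx (F x y).
Definition c2 (F : R -> R -> vec) : R -> R -> R := fun x y => vy (F x y).
Definition c3 (F : R -> R -> vec) : R -> R -> R := fun x y => vz (F x y).

Definition pdx (f : R -> R -> R) : R -> R -> R := fun x y => Derive (fun t => f t y) x.
Definition pdy (f : R -> R -> R) : R -> R -> R := fun x y => Derive (fun t => f x t) y.

(** Iterated partial derivative along a word of directions (true = x, false = y). *)
Fixpoint dpart (ds : list bool) (f : R -> R -> R) : R -> R -> R :=
  match ds with
  | nil => f
  | b :: ds' => (if b then pdx else pdy) (dpart ds' f)
  end.

Definition smooth_scalar (U : R -> R -> Prop) (f : R -> R -> R) : Prop :=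
  forall (ds : list bool) (x y : R), U x y ->
    ex_derive (fun t => dpart ds f t y) x /\
    ex_derive (fun t => dpart ds f x t) y /\
    continuity_2d_pt (dpart ds f) x y.

Definition smooth (U : R -> R -> Prop) (F : R -> R -> vec) : Prop :=
  smooth_scalar U (c1 F) /\ smooth_scalar U (c2 F) /\ smooth_scalar U (c3 F).

Definition Px (F : R -> R -> vec) : R -> R -> vec :=
  fun x y => mkv (pdx (c1 F) x y) (pdx (c2 F) x y) (pdx (c3 F) x y).
Definition Py (F : R -> R -> vec) : R -> R -> vec :=
  fun x y => mkv (pdy (c1 F) x y) (pdy (c2 F) x y) (pdy (c3 F) x y).

Definition has_px (F : R -> R -> vec) (x y : R) (v : vec) : Prop :=
  is_derive (fun t => c1 F t y) x (vx v) /\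
  is_derive (fun t => c2 F t y) x (vy v) /\
  is_derive (fun t => c3 F t y) x (vz v).
Definition has_py (F : R -> R -> vec) (x y : R) (v : vec) : Prop :=
  is_derive (fun t => c1 F x t) y (vx v) /\
  is_derive (fun t => c2 F x t) y (vy v) /\
  is_derive (fun t => c3 F x t) y (vz v).

Definition open2 (U : R -> R -> Prop) : Prop :=
  forall x y, U x y -> exists eps : posreal,
    forall x' y', (x' - x) ^ 2 + (y' - y) ^ 2 < eps ^ 2 -> U x' y'.

(** Paths/homotopies are parametrized on [0,1]
    (resp. [0,1]^2) and taken continuous on all of R (resp. R^2), which is
    no restriction (extend by clamping). *)
Definition simply_connected (U : R -> R -> Prop) : Prop :=
  (exists x y, U x y) /\
  (forall a1 a2 b1 b2, U a1 a2 -> U b1 b2 ->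
     exists g1 g2 : R -> R,
       (forall s, continuity_pt g1 s) /\ (forall s, continuity_pt g2 s) /\
       (forall s, 0 <= s <= 1 -> U (g1 s) (g2 s)) /\
       g1 0 = a1 /\ g2 0 = a2 /\ g1 1 = b1 /\ g2 1 = b2) /\
  (forall g1 g2 : R -> R,
     (forall s, continuity_pt g1 s) -> (forall s, continuity_pt g2 s) ->
     (forall s, 0 <= s <= 1 -> U (g1 s) (g2 s)) ->
     g1 0 = g1 1 -> g2 0 = g2 1 ->
     exists H1 H2 : R -> R -> R,
       (forall t s, continuity_2d_pt H1 t s) /\ (forall t s, continuity_2d_pt H2 t s) /\
       (forall t s, 0 <= t <= 1 -> 0 <= s <= 1 -> U (H1 t s) (H2 t s)) /\
       (forall s, 0 <= s <= 1 -> H1 0 s = g1 s /\ H2 0 s = g2 s) /\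
       (forall t, 0 <= t <= 1 -> H1 t 0 = H1 t 1 /\ H2 t 0 = H2 t 1) /\
       (forall s, 0 <= s <= 1 -> H1 1 s = H1 1 0 /\ H2 1 s = H2 1 0)).

Definition harmonic_on (U : R -> R -> Prop) (N : R -> R -> vec) : Prop :=
  forall x y, U x y -> cross (N x y) (vadd (Px (Px N) x y) (Py (Py N) x y)) = vzero.

Definition regular_at (g : R -> R -> vec) (x y : R) : Prop :=
  cross (Px g x y) (Py g x y) <> vzero.

Definition mean_curv (g N : R -> R -> vec) (x y : R) : R :=
  let E := dot (Px g x y) (Px g x y) in
  let F := dot (Px g x y) (Py g x y) in
  let G := dot (Py g x y) (Py g x y) in
  let l := dot (Px (Px g) x y) (N x y) in
  let m := dot (Px (Py g) x y) (N x y) in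
  let n := dot (Py (Py g) x y) (N x y) in
  (E * n - 2 * F * m + G * l) / (2 * (E * G - F ^ 2)).

From Stdlib Require Import Reals Lra Lia List.
From Coquelicot Require Import Coquelicot.
Open Scope R_scope.

(* Take g := f - t N with t = 1 or t = -1.  Since |N| = 1, N is orthogonal to N_x and N_y,
   and N . N_xx = -|N_x|^2, N . N_yy = -|N_y|^2.  From f_x = N x N_y and f_y = -N x N_x the
   tangent vectors g_x, g_y are orthogonal to N, with E = G = Q := |N_x|^2 + |N_y|^2 +
   2 t det(N, N_x, N_y) and F = 0, while l + n = t Q.  Hence g is an immersion with normal N
   and mean curvature t/2 wherever Q <> 0, and f = g + t N.  Since dN_p <> 0, Q(p) <> 0 for one
   of the two signs, and {Q <> 0} is open.  Harmonicity of N and simple connectedness are only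
   needed for f to exist. *)

Ltac vec_unfold := unfold dot, cross, vopp, vadd, vscal, vzero, mkv, vx, vy, vz; simpl.

Lemma vec_eq (v w : vec) : vx v = vx w -> vy v = vy w -> vz v = vz w -> v = w.
Proof. destruct v as [[a b] c], w as [[a' b'] c']; vec_unfold; intros; subst; reflexivity. Qed.

Lemma dot_comm (u v : vec) : dot u v = dot v u.
Proof. vec_unfold; ring. Qed.

Lemma dot_self_ge0 (v : vec) : 0 <= dot v v.
Proof. vec_unfold; nra. Qed.

Lemma dot_self_pos (v : vec) : v <> vzero -> 0 < dot v v.
Proof.
  intros Hv; destruct (Rle_lt_or_eq_dec _ _ (dot_self_ge0 v)) as [Hpos | H0]; [exact Hpos |].
  exfalso; apply Hv; destruct v as [[a b] c]; revert H0; vec_unfold; intros H0.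
  assert (a = 0) by nra; assert (b = 0) by nra; assert (c = 0) by nra; subst; reflexivity.
Qed.

Lemma dot_cross_self (u v : vec) :
  dot (cross u v) (cross u v) = dot u u * dot v v - dot u v ^ 2.
Proof. vec_unfold; ring. Qed.

(* At a point where (N, N_x, N_y) = (n, u, v), parallel_dx and parallel_dy are the partial
   derivatives of f - t N and conformal_factor is its coefficient E = G. *)
Definition parallel_dx (t : R) (n u v : vec) : vec := vadd (cross n v) (vscal (- t) u).
Definition parallel_dy (t : R) (n u v : vec) : vec := vadd (vopp (cross n u)) (vscal (- t) v).
Definition conformal_factor (t : R) (n u v : vec) : R :=
  dot u u + dot v v + 2 * t * dot n (cross u v).

Lemma conformal_factor_sign (n u v : vec) :
  u <> vzero \/ v <> vzero -> exists t, t * t = 1 /\ conformal_factor t n u v <> 0.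
Proof.
  intros Huv; unfold conformal_factor.
  assert (Hpos : 0 < dot u u + dot v v).
  { generalize (dot_self_ge0 u) (dot_self_ge0 v).
    destruct Huv as [Hu | Hv]; [generalize (dot_self_pos u Hu) | generalize (dot_self_pos v Hv)]; lra. }
  destruct (Req_dec (dot u u + dot v v + 2 * 1 * dot n (cross u v)) 0) as [H1 | H1].
  - exists (-1); split; [ring | lra].
  - exists 1; split; [ring | exact H1].
Qed.

Section ParallelAlgebra.

Variables (t : R) (n u v : vec).
Hypotheses (Ht : t * t = 1) (Hn : dot n n = 1) (Hnu : dot n u = 0) (Hnv : dot n v = 0).

Lemma dot_normal_parallel_dx : dot n (parallel_dx t n u v) = 0.
Proof.
  transitivity (- t * dot n u); [unfold parallel_dx; vec_unfold; ring | rewrite Hnu; ring].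
Qed.

Lemma dot_normal_parallel_dy : dot n (parallel_dy t n u v) = 0.
Proof.
  transitivity (- t * dot n v); [unfold parallel_dy; vec_unfold; ring | rewrite Hnv; ring].
Qed.

Lemma parallel_first_form :
  dot (parallel_dx t n u v) (parallel_dx t n u v) = conformal_factor t n u v /\
  dot (parallel_dy t n u v) (parallel_dy t n u v) = conformal_factor t n u v /\
  dot (parallel_dx t n u v) (parallel_dy t n u v) = 0.
Proof.
  unfold conformal_factor; split; [| split].
  - transitivity (dot v v * dot n n - dot n v ^ 2 + t * t * dot u u + 2 * t * dot n (cross u v));
      [unfold parallel_dx; vec_unfold; ring | rewrite Hn, Hnv, Ht; ring].
  - transitivity (dot u u * dot n n - dot n u ^ 2 + t * t * dot v v + 2 * t * dot n (cross u v));
      [unfold parallel_dy; vec_unfold; ring | rewrite Hn, Hnu, Ht; ring].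
  - transitivity (dot n u * dot n v - dot n n * dot u v + t * t * dot u v);
      [unfold parallel_dx, parallel_dy; vec_unfold; ring | rewrite Hn, Hnu, Ht; ring].
Qed.

Lemma parallel_regular :
  conformal_factor t n u v <> 0 -> cross (parallel_dx t n u v) (parallel_dy t n u v) <> vzero.
Proof.
  intros HQ Hc; apply HQ.
  destruct parallel_first_form as [HE [HG HF]].
  assert (H := dot_cross_self (parallel_dx t n u v) (parallel_dy t n u v)).
  rewrite Hc, HE, HG, HF in H; revert H; vec_unfold; intros H; nra.
Qed.

End ParallelAlgebra.

(* The two vectors are (f - t N)_xx and (f - t N)_yy, with A = N_xx, B = (N_y)_x,
   C = (N_x)_y, D = N_yy; B and C drop out of l + n. *)
Lemma parallel_second_form_trace (t : R) (n u v A B C D : vec) :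
  t * t = 1 -> dot u u + dot n A = 0 -> dot v v + dot n D = 0 ->
  dot (vadd (vadd (cross u v) (cross n B)) (vscal (- t) A)) n +
  dot (vadd (vopp (vadd (cross v u) (cross n C))) (vscal (- t) D)) n =
  t * conformal_factor t n u v.
Proof.
  intros Ht HA HD; unfold conformal_factor.
  transitivity (2 * dot n (cross u v) - t * (dot n A + dot n D));
    [vec_unfold; ring |].
  replace (dot n A) with (- dot u u) by lra; replace (dot n D) with (- dot v v) by lra.
  replace (t * (dot u u + dot v v + 2 * t * dot n (cross u v)))
    with (t * (dot u u + dot v v) + 2 * (t * t) * dot n (cross u v)) by ring.
  rewrite Ht; ring.
Qed.

Lemma mean_curv_conformal (g N : R -> R -> vec) (x y Q : R) :
  dot (Px g x y) (Px g x y) = Q -> dot (Py g x y) (Py g x y) = Q ->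
  dot (Px g x y) (Py g x y) = 0 -> Q <> 0 ->
  mean_curv g N x y = (dot (Px (Px g) x y) (N x y) + dot (Py (Py g) x y) (N x y)) / (2 * Q).
Proof. intros HE HG HF HQ; unfold mean_curv; cbv zeta; rewrite HE, HG, HF; field; exact HQ. Qed.

(** * Derivatives of curves in R^3 *)

Definition is_vderive (F : R -> vec) (s : R) (v : vec) : Prop :=
  is_derive (fun r => vx (F r)) s (vx v) /\
  is_derive (fun r => vy (F r)) s (vy v) /\
  is_derive (fun r => vz (F r)) s (vz v).

Lemma is_derive_eq (f : R -> R) (s l l' : R) : is_derive f s l -> l = l' -> is_derive f s l'.
Proof. intros H <-; exact H. Qed.

Lemma is_derive_Rplus (a b : R -> R) (s da db : R) :
  is_derive a s da -> is_derive b s db -> is_derive (fun r => a r + b r) s (da + db).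
Proof. exact (is_derive_plus a b s da db). Qed.

Lemma is_derive_Rmult (a b : R -> R) (s da db : R) :
  is_derive a s da -> is_derive b s db ->
  is_derive (fun r => a r * b r) s (da * b s + a s * db).
Proof. intros Ha Hb; exact (is_derive_mult a b s da db Ha Hb Rmult_comm). Qed.

Lemma is_derive_Rmult_sub (a b c d : R -> R) (s da db dc dd : R) :
  is_derive a s da -> is_derive b s db -> is_derive c s dc -> is_derive d s dd ->
  is_derive (fun r => a r * b r - c r * d r) s (da * b s + a s * db - (dc * d s + c s * dd)).
Proof.
  intros Ha Hb Hc Hd.
  exact (is_derive_minus _ _ s _ _ (is_derive_Rmult a b s da db Ha Hb) (is_derive_Rmult c d s dc dd Hc Hd)).
Qed.

Section CurveDerivatives.

Variables (A B : R -> vec) (s : R) (a b : vec).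
Hypotheses (HA : is_vderive A s a) (HB : is_vderive B s b).

Lemma is_vderive_vadd : is_vderive (fun r => vadd (A r) (B r)) s (vadd a b).
Proof.
  destruct HA as [a1 [a2 a3]], HB as [b1 [b2 b3]].
  split; [| split];
    [exact (is_derive_Rplus _ _ s _ _ a1 b1) | exact (is_derive_Rplus _ _ s _ _ a2 b2)
    | exact (is_derive_Rplus _ _ s _ _ a3 b3)].
Qed.

Lemma is_vderive_vscal (c : R) : is_vderive (fun r => vscal c (A r)) s (vscal c a).
Proof. destruct HA as [a1 [a2 a3]]; split; [| split]; apply is_derive_scal; assumption. Qed.

Lemma is_vderive_cross :
  is_vderive (fun r => cross (A r) (B r)) s (vadd (cross a (B s)) (cross (A s) b)).
Proof.
  destruct HA as [a1 [a2 a3]], HB as [b1 [b2 b3]].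
  split; [| split]; (eapply is_derive_eq; [apply is_derive_Rmult_sub; eassumption | vec_unfold; ring]).
Qed.

Lemma is_derive_dot :
  is_derive (fun r => dot (A r) (B r)) s (dot a (B s) + dot (A s) b).
Proof.
  destruct HA as [a1 [a2 a3]], HB as [b1 [b2 b3]].
  eapply is_derive_eq.
  - exact (is_derive_Rplus _ _ s _ _
      (is_derive_Rplus _ _ s _ _ (is_derive_Rmult _ _ s _ _ a1 b1) (is_derive_Rmult _ _ s _ _ a2 b2))
      (is_derive_Rmult _ _ s _ _ a3 b3)).
  - vec_unfold; ring.
Qed.

End CurveDerivatives.

Lemma is_vderive_ext_loc (F G : R -> vec) (s : R) (v : vec) :
  locally s (fun r => F r = G r) -> is_vderive F s v -> is_vderive G s v.
Proof.
  intros Hloc [h1 [h2 h3]].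
  assert (Hc : forall p : vec -> R, locally s (fun r => p (F r) = p (G r))).
  { intros p; apply (filter_imp (fun r => F r = G r)); [intros r ->; reflexivity | exact Hloc]. }
  split; [| split];
    [exact (is_derive_ext_loc _ _ s _ (Hc vx) h1) | exact (is_derive_ext_loc _ _ s _ (Hc vy) h2)
    | exact (is_derive_ext_loc _ _ s _ (Hc vz) h3)].
Qed.

Lemma dot_derive_of_const (A B : R -> vec) (s c : R) (a b : vec) :
  locally s (fun r => dot (A r) (B r) = c) -> is_vderive A s a -> is_vderive B s b ->
  dot a (B s) + dot (A s) b = 0.
Proof.
  intros Hc HA HB.
  assert (H0 : is_derive (fun r => dot (A r) (B r)) s 0).
  { apply (is_derive_ext_loc (fun _ => c)); [| exact (is_derive_const c s)].
    apply (filter_imp _ _ (fun r (Hr : dot (A r) (B r) = c) => eq_sym Hr) Hc). }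
  rewrite <- (is_derive_unique _ _ _ (is_derive_dot A B s a b HA HB)).
  exact (is_derive_unique _ _ _ H0).
Qed.

(** * Open sets and partial derivatives *)

Lemma open2_locally_2d (U : R -> R -> Prop) :
  open2 U <-> forall x y, U x y -> locally_2d U x y.
Proof.
  split.
  - intros HU x y Hxy; destruct (HU x y Hxy) as [eps Heps].
    assert (Hd : 0 < eps / 2) by (generalize (cond_pos eps); lra).
    exists (mkposreal _ Hd); simpl; intros u v Hu Hv; apply Heps.
    rewrite <- (pow2_abs (u - x)), <- (pow2_abs (v - y)).
    generalize (Rabs_pos (u - x)) (Rabs_pos (v - y)) (cond_pos eps); nra.
  - intros HU x y Hxy; destruct (HU x y Hxy) as [d Hd]; exists d; intros u v Huv.
    generalize (cond_pos d) (Rabs_pos (u - x)) (Rabs_pos (v - y)) (pow2_ge_0 (u - x)) (pow2_ge_0 (v - y)).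
    rewrite <- (pow2_abs (u - x)), <- (pow2_abs (v - y)) in Huv.
    intros; apply Hd; nra.
Qed.

Lemma open2_locally_x (U : R -> R -> Prop) (x y : R) :
  open2 U -> U x y -> locally x (fun s => U s y).
Proof. intros HU Hxy; exact (locally_2d_1d_const_y U x y (proj1 (open2_locally_2d U) HU x y Hxy)). Qed.

Lemma open2_locally_y (U : R -> R -> Prop) (x y : R) :
  open2 U -> U x y -> locally y (fun s => U x s).
Proof. intros HU Hxy; exact (locally_2d_1d_const_x U x y (proj1 (open2_locally_2d U) HU x y Hxy)). Qed.

Lemma open2_and_neq0 (U : R -> R -> Prop) (h : R -> R -> R) :
  open2 U -> (forall x y, U x y -> continuity_2d_pt h x y) ->
  open2 (fun x y => U x y /\ h x y <> 0).
Proof.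
  intros HU Hh; apply open2_locally_2d; intros x y [Hxy Hnz].
  apply locally_2d_and; [exact (proj1 (open2_locally_2d U) HU x y Hxy) |].
  exact (continuity_2d_pt_neq_0 h x y (Hh x y Hxy) Hnz).
Qed.

Lemma Px_of_is_vderive (F : R -> R -> vec) (x y : R) (v : vec) :
  is_vderive (fun s => F s y) x v -> Px F x y = v.
Proof.
  intros [h1 [h2 h3]]; apply vec_eq;
    [exact (is_derive_unique _ _ _ h1) | exact (is_derive_unique _ _ _ h2) | exact (is_derive_unique _ _ _ h3)].
Qed.

Lemma Py_of_is_vderive (F : R -> R -> vec) (x y : R) (v : vec) :
  is_vderive (fun s => F x s) y v -> Py F x y = v.
Proof.
  intros [h1 [h2 h3]]; apply vec_eq;
    [exact (is_derive_unique _ _ _ h1) | exact (is_derive_unique _ _ _ h2) | exact (is_derive_unique _ _ _ h3)].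
Qed.

Lemma smooth_is_vderive_x (U : R -> R -> Prop) (F : R -> R -> vec) (x y : R) :
  smooth U F -> U x y -> is_vderive (fun s => F s y) x (Px F x y).
Proof.
  intros [H1 [H2 H3]] Hxy; split; [| split];
    [exact (Derive_correct _ _ (proj1 (H1 nil x y Hxy))) | exact (Derive_correct _ _ (proj1 (H2 nil x y Hxy)))
    | exact (Derive_correct _ _ (proj1 (H3 nil x y Hxy)))].
Qed.

Lemma smooth_is_vderive_y (U : R -> R -> Prop) (F : R -> R -> vec) (x y : R) :
  smooth U F -> U x y -> is_vderive (fun s => F x s) y (Py F x y).
Proof.
  intros [H1 [H2 H3]] Hxy; split; [| split];
    [exact (Derive_correct _ _ (proj1 (proj2 (H1 nil x y Hxy))))
    | exact (Derive_correct _ _ (proj1 (proj2 (H2 nil x y Hxy))))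
    | exact (Derive_correct _ _ (proj1 (proj2 (H3 nil x y Hxy))))].
Qed.

Section DotOfConstant.

Variables (U : R -> R -> Prop) (A B : R -> R -> vec) (c : R).
Hypotheses (HU : open2 U) (HA : smooth U A) (HB : smooth U B)
  (Hc : forall x y, U x y -> dot (A x y) (B x y) = c).

Lemma dot_Px_of_const (x y : R) :
  U x y -> dot (Px A x y) (B x y) + dot (A x y) (Px B x y) = 0.
Proof.
  intros Hxy; apply (dot_derive_of_const (fun s => A s y) (fun s => B s y) x c).
  - apply (filter_imp (fun s => U s y)); [intros s; apply Hc | exact (open2_locally_x U x y HU Hxy)].
  - exact (smooth_is_vderive_x U A x y HA Hxy).
  - exact (smooth_is_vderive_x U B x y HB Hxy).
Qed.

Lemma dot_Py_of_const (x y : R) :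
  U x y -> dot (Py A x y) (B x y) + dot (A x y) (Py B x y) = 0.
Proof.
  intros Hxy; apply (dot_derive_of_const (fun s => A x s) (fun s => B x s) y c).
  - apply (filter_imp (fun s => U x s)); [intros s; apply Hc | exact (open2_locally_y U x y HU Hxy)].
  - exact (smooth_is_vderive_y U A x y HA Hxy).
  - exact (smooth_is_vderive_y U B x y HB Hxy).
Qed.

End DotOfConstant.

(** * Smooth functions *)

Lemma continuity_2d_pt_of_partials (U : R -> R -> Prop) (F : R -> R -> R) (x y : R) :
  open2 U -> U x y ->
  (forall u v, U u v -> ex_derive (fun s => F s v) u) ->
  continuity_2d_pt (pdx F) x y ->
  ex_derive (fun s => F x s) y ->
  continuity_2d_pt F x y.
Proof.
  intros HU Hxy Hdx Hc Hdy eps.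
  set (M := Rabs (pdx F x y) + 1).
  assert (HM : 0 < M) by (unfold M; generalize (Rabs_pos (pdx F x y)); lra).
  assert (Hbox : locally_2d (fun u v => U u v /\ Rabs (pdx F u v) <= M) x y).
  { apply locally_2d_and; [exact (proj1 (open2_locally_2d U) HU x y Hxy) |].
    apply (locally_2d_impl (fun u v => Rabs (pdx F u v - pdx F x y) < 1));
      [apply locally_2d_forall | exact (Hc (mkposreal 1 Rlt_0_1))].
    intros u v Huv; unfold M; generalize (Rabs_triang_inv (pdx F u v) (pdx F x y)); lra. }
  assert (Heps2 : 0 < eps / 2) by (generalize (cond_pos eps); lra).
  destruct Hbox as [d1 Hd1].
  destruct (ex_derive_continuous _ _ Hdy _ (locally_ball _ (mkposreal _ Heps2))) as [d2 Hd2].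
  assert (Hd3 : 0 < eps / (2 * M)) by (apply Rdiv_lt_0_compat; [apply cond_pos | lra]).
  assert (Hd : 0 < Rmin (Rmin d1 d2) (eps / (2 * M)))
    by (repeat apply Rmin_pos; try apply cond_pos; exact Hd3).
  exists (mkposreal _ Hd); simpl; intros u v Hu Hv.
  generalize (Rmin_l (Rmin d1 d2) (eps / (2 * M))) (Rmin_r (Rmin d1 d2) (eps / (2 * M)))
    (Rmin_l d1 d2) (Rmin_r d1 d2); intros.
  (* the segment from (x, v) to (u, v) stays in the box, where |F_x| <= M *)
  assert (Hhoriz : Rabs (F u v - F x v) <= M * Rabs (u - x)).
  { apply (bounded_variation (fun s => F s v) (fun s => pdx F s v)); intros s Hs.
    destruct (Hd1 s v ltac:(lra) ltac:(lra)) as [HUs HMs].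
    split; [exact (Derive_correct _ _ (Hdx s v HUs)) | exact HMs]. }
  assert (Hvert : Rabs (F x v - F x y) < eps / 2).
  { assert (Hv2 : Rabs (v - y) < d2) by lra; exact (Hd2 v Hv2). }
  assert (Hlin : M * Rabs (u - x) <= eps / 2).
  { apply (Rle_trans _ (M * (eps / (2 * M)))); [apply Rmult_le_compat_l; lra |].
    right; field; lra. }
  replace (F u v - F x y) with ((F u v - F x v) + (F x v - F x y)) by ring.
  generalize (Rabs_triang (F u v - F x v) (F x v - F x y)); lra.
Qed.

Definition pdb (b : bool) : (R -> R -> R) -> R -> R -> R := if b then pdx else pdy.

Lemma dpart_snoc (ds : list bool) (b : bool) (h : R -> R -> R) :
  dpart (ds ++ b :: nil) h = dpart ds (pdb b h).
Proof. induction ds as [| a ds IH]; simpl; [destruct b; reflexivity | rewrite IH; reflexivity]. Qed.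

Definition smooth_word (U : R -> R -> Prop) (h : R -> R -> R) (ds : list bool) : Prop :=
  forall x y, U x y ->
    ex_derive (fun t => dpart ds h t y) x /\
    ex_derive (fun t => dpart ds h x t) y /\
    continuity_2d_pt (dpart ds h) x y.

Definition smooth_upto (U : R -> R -> Prop) (n : nat) (h : R -> R -> R) : Prop :=
  forall ds, (length ds <= n)%nat -> smooth_word U h ds.

Section SmoothClosure.

Variable U : R -> R -> Prop.
Hypothesis HU : open2 U.

Lemma smooth_scalar_upto (h : R -> R -> R) : smooth_scalar U h <-> forall n, smooth_upto U n h.
Proof.
  split; [intros H n ds _; exact (H ds) | intros H ds; exact (H (length ds) ds (le_n _))].
Qed.

Lemma smooth_word_snoc (h : R -> R -> R) (ds : list bool) (b : bool) :
  smooth_word U h (ds ++ b :: nil) <-> smooth_word U (pdb b h) ds.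
Proof. unfold smooth_word; rewrite dpart_snoc; tauto. Qed.

Lemma smooth_upto_0 (h : R -> R -> R) : smooth_word U h nil -> smooth_upto U 0 h.
Proof. intros H [| b ds] Hl; [exact H | simpl in Hl; lia]. Qed.

Lemma smooth_upto_S (n : nat) (h : R -> R -> R) :
  smooth_word U h nil -> (forall b, smooth_upto U n (pdb b h)) -> smooth_upto U (S n) h.
Proof.
  intros H0 Hb ds; induction ds as [| b ds _] using rev_ind; intros Hl; [exact H0 |].
  rewrite length_app in Hl; simpl in Hl.
  apply (smooth_word_snoc h ds b), Hb; lia.
Qed.

Lemma smooth_upto_nil (n : nat) (h : R -> R -> R) : smooth_upto U n h -> smooth_word U h nil.
Proof. intros H; apply H; simpl; lia. Qed.

Lemma smooth_upto_pred (n : nat) (h : R -> R -> R) : smooth_upto U (S n) h -> smooth_upto U n h.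
Proof. intros H ds Hl; apply H; lia. Qed.

Lemma smooth_upto_pdb (n : nat) (b : bool) (h : R -> R -> R) :
  smooth_upto U (S n) h -> smooth_upto U n (pdb b h).
Proof. intros H ds Hl; apply (smooth_word_snoc h ds b), H; rewrite length_app; simpl; lia. Qed.

Lemma dpart_ext_open (F G : R -> R -> R) :
  (forall x y, U x y -> F x y = G x y) ->
  forall ds x y, U x y -> dpart ds F x y = dpart ds G x y.
Proof.
  intros HFG ds; induction ds as [| [|] ds IH]; intros x y Hxy; cbn [dpart]; [auto | |];
    apply Derive_ext_loc.
  - apply (filter_imp (fun s => U s y)); [intros s; apply IH | exact (open2_locally_x U x y HU Hxy)].
  - apply (filter_imp (fun s => U x s)); [intros s; apply IH | exact (open2_locally_y U x y HU Hxy)].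
Qed.

Lemma smooth_word_ext_open (F G : R -> R -> R) (ds : list bool) :
  (forall x y, U x y -> F x y = G x y) -> smooth_word U G ds -> smooth_word U F ds.
Proof.
  intros HFG HG x y Hxy; destruct (HG x y Hxy) as [H1 [H2 H3]].
  assert (E := dpart_ext_open F G HFG ds).
  split; [| split].
  - apply (ex_derive_ext_loc (fun t => dpart ds G t y)); [| exact H1].
    apply (filter_imp (fun s => U s y)); [intros s Hs; symmetry; apply E, Hs | exact (open2_locally_x U x y HU Hxy)].
  - apply (ex_derive_ext_loc (fun t => dpart ds G x t)); [| exact H2].
    apply (filter_imp (fun s => U x s)); [intros s Hs; symmetry; apply E, Hs | exact (open2_locally_y U x y HU Hxy)].
  - apply (continuity_2d_pt_ext_loc (dpart ds G)); [| exact H3].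
    apply (locally_2d_impl U); [apply locally_2d_forall; intros u v Huv; symmetry; apply E, Huv |].
    exact (proj1 (open2_locally_2d U) HU x y Hxy).
Qed.

Lemma smooth_upto_ext_open (n : nat) (F G : R -> R -> R) :
  (forall x y, U x y -> F x y = G x y) -> smooth_upto U n G -> smooth_upto U n F.
Proof. intros HFG HG ds Hl; exact (smooth_word_ext_open F G ds HFG (HG ds Hl)). Qed.

Section Binary.

Variables f g : R -> R -> R.
Hypotheses (Hf : smooth_word U f nil) (Hg : smooth_word U g nil).

Lemma smooth_word_nil_plus : smooth_word U (fun x y => f x y + g x y) nil.
Proof.
  intros x y Hxy; destruct (Hf x y Hxy) as [f1 [f2 f3]], (Hg x y Hxy) as [g1 [g2 g3]].
  split; [| split]; [exact (ex_derive_plus _ _ x f1 g1) | exact (ex_derive_plus _ _ y f2 g2) |].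
  exact (continuity_2d_pt_plus _ _ x y f3 g3).
Qed.

Lemma smooth_word_nil_mult : smooth_word U (fun x y => f x y * g x y) nil.
Proof.
  intros x y Hxy; destruct (Hf x y Hxy) as [f1 [f2 f3]], (Hg x y Hxy) as [g1 [g2 g3]].
  split; [| split]; [exact (ex_derive_mult _ _ x f1 g1) | exact (ex_derive_mult _ _ y f2 g2) |].
  exact (continuity_2d_pt_mult _ _ x y f3 g3).
Qed.

Lemma pdb_plus (b : bool) (x y : R) :
  U x y -> pdb b (fun x y => f x y + g x y) x y = pdb b f x y + pdb b g x y.
Proof.
  intros Hxy; destruct (Hf x y Hxy) as [f1 [f2 _]], (Hg x y Hxy) as [g1 [g2 _]].
  destruct b; [exact (Derive_plus _ _ x f1 g1) | exact (Derive_plus _ _ y f2 g2)].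
Qed.

Lemma pdb_mult (b : bool) (x y : R) :
  U x y -> pdb b (fun x y => f x y * g x y) x y = pdb b f x y * g x y + f x y * pdb b g x y.
Proof.
  intros Hxy; destruct (Hf x y Hxy) as [f1 [f2 _]], (Hg x y Hxy) as [g1 [g2 _]].
  destruct b; [exact (Derive_mult _ _ x f1 g1) | exact (Derive_mult _ _ y f2 g2)].
Qed.

End Binary.

Lemma smooth_upto_plus (n : nat) : forall f g : R -> R -> R,
  smooth_upto U n f -> smooth_upto U n g -> smooth_upto U n (fun x y => f x y + g x y).
Proof.
  induction n as [| n IH]; intros f g Hf Hg.
  - apply smooth_upto_0, smooth_word_nil_plus; eapply smooth_upto_nil; eassumption.
  - apply smooth_upto_S; [apply smooth_word_nil_plus; eapply smooth_upto_nil; eassumption |].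
    intros b; apply (smooth_upto_ext_open n _ (fun x y => pdb b f x y + pdb b g x y)).
    + apply pdb_plus; eapply smooth_upto_nil; eassumption.
    + exact (IH _ _ (smooth_upto_pdb n b f Hf) (smooth_upto_pdb n b g Hg)).
Qed.

Lemma smooth_upto_mult (n : nat) : forall f g : R -> R -> R,
  smooth_upto U n f -> smooth_upto U n g -> smooth_upto U n (fun x y => f x y * g x y).
Proof.
  induction n as [| n IH]; intros f g Hf Hg.
  - apply smooth_upto_0, smooth_word_nil_mult; eapply smooth_upto_nil; eassumption.
  - apply smooth_upto_S; [apply smooth_word_nil_mult; eapply smooth_upto_nil; eassumption |].
    intros b; apply (smooth_upto_ext_open n _ (fun x y => pdb b f x y * g x y + f x y * pdb b g x y)).
    + apply pdb_mult; eapply smooth_upto_nil; eassumption.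
    + apply smooth_upto_plus;
        [apply (IH (pdb b f) g) | apply (IH f (pdb b g))];
        solve [exact (smooth_upto_pdb n b _ Hf) | exact (smooth_upto_pdb n b _ Hg)
              | exact (smooth_upto_pred n _ Hf) | exact (smooth_upto_pred n _ Hg)].
Qed.

Lemma smooth_scalar_plus (f g : R -> R -> R) :
  smooth_scalar U f -> smooth_scalar U g -> smooth_scalar U (fun x y => f x y + g x y).
Proof.
  rewrite !smooth_scalar_upto; intros Hf Hg n; exact (smooth_upto_plus n f g (Hf n) (Hg n)).
Qed.

Lemma smooth_scalar_mult (f g : R -> R -> R) :
  smooth_scalar U f -> smooth_scalar U g -> smooth_scalar U (fun x y => f x y * g x y).
Proof.
  rewrite !smooth_scalar_upto; intros Hf Hg n; exact (smooth_upto_mult n f g (Hf n) (Hg n)).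
Qed.

Lemma smooth_scalar_ext_open (F G : R -> R -> R) :
  (forall x y, U x y -> F x y = G x y) -> smooth_scalar U G -> smooth_scalar U F.
Proof. intros HFG HG ds; exact (smooth_word_ext_open F G ds HFG (HG ds)). Qed.

End SmoothClosure.

Lemma dpart_const (c : R) (ds : list bool) : exists k, forall x y, dpart ds (fun _ _ => c) x y = k.
Proof.
  induction ds as [| b ds [k Hk]]; cbn [dpart]; [exists c; reflexivity |].
  exists 0; intros x y; destruct b; unfold pdx, pdy;
    rewrite (Derive_ext _ (fun _ => k)) by auto; apply Derive_const.
Qed.

Lemma smooth_scalar_const (U : R -> R -> Prop) (c : R) : smooth_scalar U (fun _ _ => c).
Proof.
  intros ds x y _; destruct (dpart_const c ds) as [k Hk]; split; [| split].
  - apply (ex_derive_ext (fun _ => k)); [intros; auto | apply ex_derive_const].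
  - apply (ex_derive_ext (fun _ => k)); [intros; auto | apply ex_derive_const].
  - apply (continuity_2d_pt_ext (fun _ _ => k)); [intros; auto | apply continuity_2d_pt_const].
Qed.

Lemma smooth_scalar_pdb (U : R -> R -> Prop) (b : bool) (h : R -> R -> R) :
  smooth_scalar U h -> smooth_scalar U (pdb b h).
Proof. intros H ds; apply (smooth_word_snoc U h ds b); exact (H (ds ++ b :: nil)). Qed.

Lemma smooth_scalar_subset (U V : R -> R -> Prop) (h : R -> R -> R) :
  (forall x y, U x y -> V x y) -> smooth_scalar V h -> smooth_scalar U h.
Proof. intros HUV H ds x y Hxy; exact (H ds x y (HUV x y Hxy)). Qed.

Lemma smooth_scalar_of_partials (U : R -> R -> Prop) (F h1 h2 : R -> R -> R) :
  open2 U -> smooth_scalar U h1 -> smooth_scalar U h2 ->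
  (forall x y, U x y -> is_derive (fun s => F s y) x (h1 x y) /\ is_derive (fun s => F x s) y (h2 x y)) ->
  smooth_scalar U F.
Proof.
  intros HU S1 S2 HD.
  assert (E1 : forall x y, U x y -> pdx F x y = h1 x y)
    by (intros x y Hxy; exact (is_derive_unique _ _ _ (proj1 (HD x y Hxy)))).
  assert (E2 : forall x y, U x y -> pdy F x y = h2 x y)
    by (intros x y Hxy; exact (is_derive_unique _ _ _ (proj2 (HD x y Hxy)))).
  intros ds; induction ds as [| [|] ds _] using rev_ind.
  - intros x y Hxy; split; [| split].
    + exists (h1 x y); exact (proj1 (HD x y Hxy)).
    + exists (h2 x y); exact (proj2 (HD x y Hxy)).
    + apply (continuity_2d_pt_of_partials U F x y HU Hxy).
      * intros u v Huv; exists (h1 u v); exact (proj1 (HD u v Huv)).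
      * apply (continuity_2d_pt_ext_loc h1); [| exact (proj2 (proj2 (S1 nil x y Hxy)))].
        apply (locally_2d_impl U); [apply locally_2d_forall; intros u v Huv; symmetry; apply E1, Huv |].
        exact (proj1 (open2_locally_2d U) HU x y Hxy).
      * exists (h2 x y); exact (proj2 (HD x y Hxy)).
  - apply (smooth_word_snoc U F ds true), (smooth_word_ext_open U HU _ h1); [exact E1 | exact (S1 ds)].
  - apply (smooth_word_snoc U F ds false), (smooth_word_ext_open U HU _ h2); [exact E2 | exact (S2 ds)].
Qed.

Section SmoothVector.

Variable U : R -> R -> Prop.
Hypothesis HU : open2 U.

Lemma smooth_scalar_minus (f g : R -> R -> R) :
  smooth_scalar U f -> smooth_scalar U g -> smooth_scalar U (fun x y => f x y - g x y).
Proof.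
  intros Hf Hg; apply (smooth_scalar_ext_open U HU _ (fun x y => f x y + (-1) * g x y)); [intros; ring |].
  apply (smooth_scalar_plus U HU); [exact Hf |].
  apply (smooth_scalar_mult U HU); [apply smooth_scalar_const | exact Hg].
Qed.

Lemma smooth_vadd (A B : R -> R -> vec) :
  smooth U A -> smooth U B -> smooth U (fun x y => vadd (A x y) (B x y)).
Proof.
  intros [A1 [A2 A3]] [B1 [B2 B3]]; split; [| split];
    [exact (smooth_scalar_plus U HU _ _ A1 B1) | exact (smooth_scalar_plus U HU _ _ A2 B2)
    | exact (smooth_scalar_plus U HU _ _ A3 B3)].
Qed.

Lemma smooth_vscal (c : R) (A : R -> R -> vec) : smooth U A -> smooth U (fun x y => vscal c (A x y)).
Proof.
  assert (Hc := smooth_scalar_const U c).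
  intros [A1 [A2 A3]]; split; [| split];
    [exact (smooth_scalar_mult U HU _ _ Hc A1) | exact (smooth_scalar_mult U HU _ _ Hc A2)
    | exact (smooth_scalar_mult U HU _ _ Hc A3)].
Qed.

Lemma smooth_cross (A B : R -> R -> vec) :
  smooth U A -> smooth U B -> smooth U (fun x y => cross (A x y) (B x y)).
Proof.
  intros [A1 [A2 A3]] [B1 [B2 B3]].
  split; [| split]; apply smooth_scalar_minus; apply (smooth_scalar_mult U HU); assumption.
Qed.

Lemma smooth_dot (A B : R -> R -> vec) :
  smooth U A -> smooth U B -> smooth_scalar U (fun x y => dot (A x y) (B x y)).
Proof.
  intros [A1 [A2 A3]] [B1 [B2 B3]].
  exact (smooth_scalar_plus U HU _ _
    (smooth_scalar_plus U HU _ _ (smooth_scalar_mult U HU _ _ A1 B1) (smooth_scalar_mult U HU _ _ A2 B2))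
    (smooth_scalar_mult U HU _ _ A3 B3)).
Qed.

Lemma smooth_of_partials (F A B : R -> R -> vec) :
  smooth U A -> smooth U B ->
  (forall x y, U x y -> has_px F x y (A x y) /\ has_py F x y (B x y)) -> smooth U F.
Proof.
  intros [A1 [A2 A3]] [B1 [B2 B3]] HD; split; [| split];
    [ apply (smooth_scalar_of_partials U _ _ _ HU A1 B1)
    | apply (smooth_scalar_of_partials U _ _ _ HU A2 B2)
    | apply (smooth_scalar_of_partials U _ _ _ HU A3 B3)];
    intros x y Hxy; destruct (HD x y Hxy) as [[hx1 [hx2 hx3]] [hy1 [hy2 hy3]]]; split; assumption.
Qed.

End SmoothVector.

Lemma smooth_Px (U : R -> R -> Prop) (F : R -> R -> vec) : smooth U F -> smooth U (Px F).
Proof.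
  intros [F1 [F2 F3]]; split; [| split];
    [exact (smooth_scalar_pdb U true _ F1) | exact (smooth_scalar_pdb U true _ F2)
    | exact (smooth_scalar_pdb U true _ F3)].
Qed.

Lemma smooth_Py (U : R -> R -> Prop) (F : R -> R -> vec) : smooth U F -> smooth U (Py F).
Proof.
  intros [F1 [F2 F3]]; split; [| split];
    [exact (smooth_scalar_pdb U false _ F1) | exact (smooth_scalar_pdb U false _ F2)
    | exact (smooth_scalar_pdb U false _ F3)].
Qed.

Lemma smooth_subset (U V : R -> R -> Prop) (F : R -> R -> vec) :
  (forall x y, U x y -> V x y) -> smooth V F -> smooth U F.
Proof.
  intros HUV [F1 [F2 F3]]; split; [| split]; eapply smooth_scalar_subset; eassumption.
Qed.

(** * The parallel surface *)

Definition parallel (f N : R -> R -> vec) (t : R) : R -> R -> vec :=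
  fun x y => vadd (f x y) (vscal t (N x y)).

Section ParallelSurface.

Variables (Om : R -> R -> Prop) (N f : R -> R -> vec) (t : R).
Hypotheses (HOm : open2 Om) (HN : smooth Om N)
  (Hunit : forall x y, Om x y -> dot (N x y) (N x y) = 1)
  (Hf : forall x y, Om x y ->
     has_px f x y (cross (N x y) (Py N x y)) /\ has_py f x y (vopp (cross (N x y) (Px N x y))))
  (Ht : t * t = 1).

Let HNx : smooth Om (Px N) := smooth_Px Om N HN.
Let HNy : smooth Om (Py N) := smooth_Py Om N HN.

Lemma unit_normal_orth_x (x y : R) : Om x y -> dot (N x y) (Px N x y) = 0.
Proof.
  intros Hxy; generalize (dot_Px_of_const Om N N 1 HOm HN HN Hunit x y Hxy).
  rewrite (dot_comm (Px N x y)); lra.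
Qed.

Lemma unit_normal_orth_y (x y : R) : Om x y -> dot (N x y) (Py N x y) = 0.
Proof.
  intros Hxy; generalize (dot_Py_of_const Om N N 1 HOm HN HN Hunit x y Hxy).
  rewrite (dot_comm (Py N x y)); lra.
Qed.

Lemma unit_normal_Pxx (x y : R) : Om x y -> dot (Px N x y) (Px N x y) + dot (N x y) (Px (Px N) x y) = 0.
Proof. exact (dot_Px_of_const Om N (Px N) 0 HOm HN HNx unit_normal_orth_x x y). Qed.

Lemma unit_normal_Pyy (x y : R) : Om x y -> dot (Py N x y) (Py N x y) + dot (N x y) (Py (Py N) x y) = 0.
Proof. exact (dot_Py_of_const Om N (Py N) 0 HOm HN HNy unit_normal_orth_y x y). Qed.

Lemma smooth_parallel : smooth Om (parallel f N (- t)).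
Proof.
  apply (smooth_vadd Om HOm); [| exact (smooth_vscal Om HOm _ _ HN)].
  apply (smooth_of_partials Om HOm f _ _ (smooth_cross Om HOm _ _ HN HNy)
           (smooth_vscal Om HOm (-1) _ (smooth_cross Om HOm _ _ HN HNx)) Hf).
Qed.

Lemma Px_parallel (x y : R) :
  Om x y -> Px (parallel f N (- t)) x y = parallel_dx t (N x y) (Px N x y) (Py N x y).
Proof.
  intros Hxy; apply Px_of_is_vderive, is_vderive_vadd;
    [exact (proj1 (Hf x y Hxy)) | exact (is_vderive_vscal _ _ _ (smooth_is_vderive_x Om N x y HN Hxy) (- t))].
Qed.

Lemma Py_parallel (x y : R) :
  Om x y -> Py (parallel f N (- t)) x y = parallel_dy t (N x y) (Px N x y) (Py N x y).
Proof.
  intros Hxy; apply Py_of_is_vderive, is_vderive_vadd;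
    [exact (proj2 (Hf x y Hxy)) | exact (is_vderive_vscal _ _ _ (smooth_is_vderive_y Om N x y HN Hxy) (- t))].
Qed.

Lemma Pxx_parallel (x y : R) : Om x y ->
  Px (Px (parallel f N (- t))) x y =
  vadd (vadd (cross (Px N x y) (Py N x y)) (cross (N x y) (Px (Py N) x y))) (vscal (- t) (Px (Px N) x y)).
Proof.
  intros Hxy; apply Px_of_is_vderive.
  apply (is_vderive_ext_loc (fun s => parallel_dx t (N s y) (Px N s y) (Py N s y))).
  - apply (filter_imp (fun s => Om s y)); [intros s Hs; symmetry; exact (Px_parallel s y Hs) |].
    exact (open2_locally_x Om x y HOm Hxy).
  - pose proof (smooth_is_vderive_x Om N x y HN Hxy) as dN.
    pose proof (smooth_is_vderive_x Om (Px N) x y HNx Hxy) as dNx.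
    pose proof (smooth_is_vderive_x Om (Py N) x y HNy Hxy) as dNy.
    exact (is_vderive_vadd _ _ x _ _ (is_vderive_cross _ _ x _ _ dN dNy) (is_vderive_vscal _ x _ dNx (- t))).
Qed.

Lemma Pyy_parallel (x y : R) : Om x y ->
  Py (Py (parallel f N (- t))) x y =
  vadd (vopp (vadd (cross (Py N x y) (Px N x y)) (cross (N x y) (Py (Px N) x y)))) (vscal (- t) (Py (Py N) x y)).
Proof.
  intros Hxy; apply Py_of_is_vderive.
  apply (is_vderive_ext_loc (fun s => parallel_dy t (N x s) (Px N x s) (Py N x s))).
  - apply (filter_imp (fun s => Om x s)); [intros s Hs; symmetry; exact (Py_parallel x s Hs) |].
    exact (open2_locally_y Om x y HOm Hxy).
  - pose proof (smooth_is_vderive_y Om N x y HN Hxy) as dN.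
    pose proof (smooth_is_vderive_y Om (Px N) x y HNx Hxy) as dNx.
    pose proof (smooth_is_vderive_y Om (Py N) x y HNy Hxy) as dNy.
    exact (is_vderive_vadd _ _ y _ _ (is_vderive_vscal _ y _ (is_vderive_cross _ _ y _ _ dN dNx) (-1))
             (is_vderive_vscal _ y _ dNy (- t))).
Qed.

Lemma parallel_immersion (x y : R) :
  Om x y -> conformal_factor t (N x y) (Px N x y) (Py N x y) <> 0 ->
  regular_at (parallel f N (- t)) x y /\
  dot (N x y) (Px (parallel f N (- t)) x y) = 0 /\ dot (N x y) (Py (parallel f N (- t)) x y) = 0.
Proof.
  intros Hxy HQ; unfold regular_at; rewrite Px_parallel, Py_parallel by exact Hxy.
  split; [| split].
  - exact (parallel_regular t _ _ _ Ht (Hunit x y Hxy) (unit_normal_orth_x x y Hxy) (unit_normal_orth_y x y Hxy) HQ).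
  - exact (dot_normal_parallel_dx t _ _ _ (unit_normal_orth_x x y Hxy)).
  - exact (dot_normal_parallel_dy t _ _ _ (unit_normal_orth_y x y Hxy)).
Qed.

Lemma mean_curv_parallel (x y : R) :
  Om x y -> conformal_factor t (N x y) (Px N x y) (Py N x y) <> 0 ->
  mean_curv (parallel f N (- t)) N x y = t / 2.
Proof.
  intros Hxy HQ.
  destruct (parallel_first_form t (N x y) (Px N x y) (Py N x y) Ht (Hunit x y Hxy)
              (unit_normal_orth_x x y Hxy) (unit_normal_orth_y x y Hxy)) as [HE [HG HF]].
  rewrite <- (Px_parallel x y Hxy) in HE, HF; rewrite <- (Py_parallel x y Hxy) in HG, HF.
  rewrite (mean_curv_conformal _ _ x y _ HE HG HF HQ), Pxx_parallel, Pyy_parallel by exact Hxy.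
  rewrite (parallel_second_form_trace t _ _ _ _ _ _ _ Ht (unit_normal_Pxx x y Hxy) (unit_normal_Pyy x y Hxy)).
  field; exact HQ.
Qed.

Lemma continuous_conformal_factor (x y : R) :
  Om x y -> continuity_2d_pt (fun x y => conformal_factor t (N x y) (Px N x y) (Py N x y)) x y.
Proof.
  intros Hxy; unfold conformal_factor.
  assert (HQ : smooth_scalar Om (fun x y => dot (Px N x y) (Px N x y) + dot (Py N x y) (Py N x y) +
                                            2 * t * dot (N x y) (cross (Px N x y) (Py N x y)))).
  { exact (smooth_scalar_plus Om HOm _ _
      (smooth_scalar_plus Om HOm _ _ (smooth_dot Om HOm _ _ HNx HNx) (smooth_dot Om HOm _ _ HNy HNy))
      (smooth_scalar_mult Om HOm _ _ (smooth_scalar_const Om (2 * t))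
         (smooth_dot Om HOm _ _ HN (smooth_cross Om HOm _ _ HNx HNy)))). }
  exact (proj2 (proj2 (HQ nil x y Hxy))).
Qed.

End ParallelSurface.

Theorem proposition2p2 (Om : R -> R -> Prop) (N f : R -> R -> vec) (p1 p2 : R) :
  open2 Om -> simply_connected Om ->
  smooth Om N ->
  (forall x y, Om x y -> dot (N x y) (N x y) = 1) ->
  harmonic_on Om N ->
  (forall x y, Om x y ->
     has_px f x y (cross (N x y) (Py N x y)) /\
     has_py f x y (vopp (cross (N x y) (Px N x y)))) ->
  Om p1 p2 ->
  (Px N p1 p2 <> vzero \/ Py N p1 p2 <> vzero) ->
  exists U : R -> R -> Prop,
    open2 U /\ U p1 p2 /\ (forall x y, U x y -> Om x y) /\
    exists g : R -> R -> vec,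
      smooth U g /\
      (forall x y, U x y ->
         regular_at g x y /\
         dot (N x y) (Px g x y) = 0 /\ dot (N x y) (Py g x y) = 0) /\
      (exists H0 : R, forall x y, U x y -> mean_curv g N x y = H0) /\
      (exists t : R, forall x y, U x y -> f x y = vadd (g x y) (vscal t (N x y))).
Proof.
  intros HOm _ HN Hunit _ Hf Hp Hrank.
  destruct (conformal_factor_sign (N p1 p2) (Px N p1 p2) (Py N p1 p2) Hrank) as [t [Ht HQp]].
  exists (fun x y => Om x y /\ conformal_factor t (N x y) (Px N x y) (Py N x y) <> 0).
  split; [exact (open2_and_neq0 Om _ HOm (continuous_conformal_factor Om N t HOm HN)) |].
  split; [split; assumption |].
  split; [intros x y [Hxy _]; exact Hxy |].
  exists (parallel f N (- t)); split; [| split; [| split]].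
  - apply (smooth_subset _ Om); [intros x y [Hxy _]; exact Hxy | exact (smooth_parallel Om N f t HOm HN Hf)].
  - intros x y [Hxy HQ]; exact (parallel_immersion Om N f t HOm HN Hunit Hf Ht x y Hxy HQ).
  - exists (t / 2); intros x y [Hxy HQ]; exact (mean_curv_parallel Om N f t HOm HN Hunit Hf Ht x y Hxy HQ).
  - exists t; intros x y _; unfold parallel; apply vec_eq; vec_unfold; ring.
Qed.
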